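(* Let $U:\mathbb{N}\to\mathbb{N}$ be any function with $U(x)\ge p_{x+1}-1$ for all integers $x\ge 0$. For integers $j\ge 2$ define \[ I(j)=\left\lfloor \frac{1}{1+\sum_{k=2}^{j-1}\left\lfloor \frac{\gcd(k,j)}{k}\right\rfloor}\right\rfloor, \] for integers $i\ge 1$ define $S(i)=\sum_{j=2}^{i} I(j)$ (so $S(1)=0$), for integers $i\ge 1$, $x\ge 0$ define \[ A(i,x)=\left\lfloor \frac{1}{1+\left\lfloor \frac{S(i)}{x+1}\right\rfloor}\right\rfloor, \] and define $f_{U}(x)=1+\sum_{i=1}^{U(x)} A(i,x)$. Then for every integer $x\ge 0$, $f_{U}(x)=p_{x+1}$.
   Context: $\mathbb{N}=\{0,1,2,\dots\}$. $p_n$ denotes the $n$-th prime ($p_1=2$, $p_2=3,\dots$). $\lfloor\cdot\rfloor$ is the floor function and $\gcd$ the usual greatest common divisor; empty sums are $0$. *)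

(* all quantities are natural numbers; since every quantity
   is nonnegative, nat division m %/ d is exactly floor(m/d) for d > 0. *)
From mathcomp Require Import all_boot.
Set Implicit Arguments. Unset Strict Implicit. Unset Printing Implicit Defensive.

Lemma exists_prime_above (m : nat) : exists p, (m < p) && prime p.
Proof. case: (prime_above m) => p Hmp Hp; exists p; by rewrite Hmp Hp. Qed.

Definition next_prime (m : nat) : nat := ex_minn (exists_prime_above m).

(* nth_prime n = p_n, with p_1 = 2, p_2 = 3, ...  (nth_prime 0 = 0 is a dummy) *)
Fixpoint nth_prime (n : nat) : nat :=
  match n with
  | 0 => 0
  | k.+1 => next_prime (nth_prime k)
  end.

Definition I_fn (j : nat) : nat :=
  1 %/ (1 + \sum_(2 <= k < j) (gcdn k j %/ k)).

Definition S_fn (i : nat) : nat := \sum_(2 <= j < i.+1) I_fn j.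

Definition A_fn (i x : nat) : nat := 1 %/ (1 + S_fn i %/ x.+1).

Definition f_U (U : nat -> nat) (x : nat) : nat :=
  1 + \sum_(1 <= i < (U x).+1) A_fn i x.

From mathcomp Require Import all_boot.

(* The inner sum in I(j) counts the divisors of j in [2, j), so I(j) is the
   primality indicator of j and S(i) is the prime-counting function pi(i).
   Hence A(i, x) = 1 exactly when pi(i) <= x, i.e. when i < p_(x+1), and the
   sum defining f_U(x) counts the p_(x+1) - 1 integers 1 <= i < p_(x+1). *)

Lemma div1n_add1 s : 1 %/ (1 + s) = (s == 0).
Proof. by case: s => [|s] //; rewrite divn_small. Qed.

Lemma gcdn_divl k j : 0 < k -> gcdn k j %/ k = (k %| j).
Proof.
move=> k_gt0; have [/gcdn_idPl -> | k_ndvd_j] := boolP (k %| j).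
  by rewrite divnn k_gt0.
apply: divn_small; rewrite ltn_neqAle dvdn_leq ?dvdn_gcdl // andbT.
by apply: contraNneq k_ndvd_j => <-; rewrite dvdn_gcdr.
Qed.

Lemma prime_hasNdvd j : 1 < j -> prime j = ~~ has (dvdn^~ j) (index_iota 2 j).
Proof.
move=> j_gt1; apply/negb_inj; rewrite negbK; apply/primePn/hasP.
- case=> [|[k k_range k_dvd_j]]; first by rewrite ltnNge j_gt1.
  by exists k; rewrite ?mem_index_iota.
- by case=> k; rewrite mem_index_iota => k_range k_dvd_j; right; exists k.
Qed.

Lemma I_fn_prime j : 1 < j -> I_fn j = prime j.
Proof.
move=> j_gt1; rewrite /I_fn div1n_add1 prime_hasNdvd // sum_nat_seq_eq0 -all_predC.
congr nat_of_bool; apply: eq_in_all => k; rewrite mem_index_iota => /andP[k_gt1 _].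
by rewrite /= gcdn_divl ?(ltnW k_gt1) //; case: (k %| j).
Qed.

Lemma next_primeP m :
  [/\ m < next_prime m, prime (next_prime m)
    & forall q, m < q < next_prime m -> ~~ prime q].
Proof.
rewrite /next_prime; case: ex_minnP => p /andP[m_lt_p p_prime] p_min.
split=> // q /andP[m_lt_q q_lt_p]; apply: contraTN q_lt_p => q_prime.
by rewrite -leqNgt p_min ?m_lt_q.
Qed.

Lemma S_fnS i : S_fn i.+1 = S_fn i + prime i.+1.
Proof.
case: i => [|i]; first by rewrite /S_fn !big_geq.
by rewrite /S_fn big_nat_recr //= I_fn_prime.
Qed.

Lemma S_fn_homo : {homo S_fn : i k / i <= k}.
Proof.
move=> i k /subnK <-; elim: (k - i) => [|d IH] //.
by rewrite addSn S_fnS (leq_trans IH) ?leq_addr.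
Qed.

Lemma S_fn_prime_gap q i : q <= i < next_prime q -> S_fn i = S_fn q.
Proof.
case/andP=> /subnK <-; elim: (i - q) => [|d IH] // lt_next.
have [_ _ no_prime] := next_primeP q.
rewrite addSn S_fnS IH ?(ltnW lt_next) // (negbTE (no_prime _ _)) ?addn0 //.
by rewrite ltnS leq_addl lt_next.
Qed.

Lemma S_fn_next_prime q : S_fn (next_prime q) = (S_fn q).+1.
Proof.
have [q_lt_next next_prime_prime _] := next_primeP q.
have next_gt0 : 0 < next_prime q by apply: prime_gt0.
rewrite -(prednK next_gt0) S_fnS prednK // next_prime_prime addn1.
by rewrite (S_fn_prime_gap q) // -ltnS prednK // q_lt_next leqnn.
Qed.

Lemma S_fn_nth_prime n : S_fn (nth_prime n) = n.
Proof.
elim: n => [|n IH]; first by rewrite /S_fn big_geq.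
by rewrite /= S_fn_next_prime IH.
Qed.

Lemma S_fn_leq i x : (S_fn i <= x) = (i < nth_prime x.+1).
Proof.
have [q_lt_next next_prime_prime _] := next_primeP (nth_prime x).
have next_gt0 := prime_gt0 next_prime_prime.
have [i_lt | i_ge] := ltnP i (nth_prime x.+1).
- apply: (@leq_trans (S_fn (nth_prime x.+1).-1)).
    by apply: S_fn_homo; rewrite -ltnS prednK.
  rewrite (S_fn_prime_gap (nth_prime x)) ?S_fn_nth_prime //.
  by rewrite -ltnS prednK // q_lt_next leqnn.
- have x_lt_S : x < S_fn i by rewrite -(S_fn_nth_prime x.+1) S_fn_homo.
  by rewrite leqNgt x_lt_S.
Qed.

Lemma A_fn_nth_prime i x : A_fn i x = (i < nth_prime x.+1).
Proof. by rewrite /A_fn div1n_add1 -S_fn_leq eqn0Ngt divn_gt0 // -ltnNge. Qed.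

Lemma sum_nat_ltn m p n : m <= p <= n -> \sum_(m <= i < n) (i < p) = p - m.
Proof.
case/andP=> m_le_p p_le_n; rewrite (big_cat_nat m_le_p p_le_n) /=.
rewrite (eq_big_nat _ _ (F2 := fun=> 1)) => [|i /andP[_ ->]] //.
rewrite [X in _ + X](eq_big_nat _ _ (F2 := fun=> 0)) => [|i /andP[p_le_i _]].
  by rewrite !sum_nat_const_nat muln1 muln0 addn0.
by rewrite ltnNge p_le_i.
Qed.

Theorem mainTheorem1 (U : nat -> nat)
  (hU : forall x : nat, nth_prime x.+1 - 1 <= U x) :
  forall x : nat, f_U U x = nth_prime x.+1.
Proof.
move=> x; have [_ p_prime _] := next_primeP (nth_prime x).
have p_gt0 := prime_gt0 p_prime.
have := hU x; rewrite leq_subLR add1n => p_le_U.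
rewrite /f_U (eq_bigr _ (fun i _ => A_fn_nth_prime i x)) sum_nat_ltn ?subnKC //.
by rewrite p_gt0.
Qed.
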